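(* For integers $2\le k\le n-1$ and $0\le h\le n-k$, $\kappa_s^{(h)}(S_{n,k})$ exists and $\kappa_s^{(h)}(S_{n,k})\le n+h(k-2)-1$.
   Context: For integers $1\le k\le n-1$, let $I_n=\{1,\dots,n\}$ and $P(n,k)$ the set of $k$-permutations $p_1p_2\cdots p_k$ of distinct elements of $I_n$. The $(n,k)$-star graph $S_{n,k}$ has vertex set $P(n,k)$; a vertex $p=p_1p_2\cdots p_k$ is adjacent to (a) each vertex obtained by swapping $p_1$ with $p_i$ for $2\le i\le k$, and (b) each vertex $\alpha p_2\cdots p_k$ with $\alpha\in I_n\setminus\{p_1,\dots,p_k\}$. For a connected graph $G$ and integer $h\ge 0$, a set $S\subseteq V(G)$ is an $h$-cut ($h$-super vertex-cut) if $G-S$ is disconnected and has minimum degree at least $h$; the $h$-super connectivity $\kappa_s^{(h)}(G)$ is the minimum cardinality of an $h$-cut of $G$. Note $\kappa_s^{(0)}(G)=\kappa(G)$. *)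

From mathcomp Require Import all_boot.
Set Implicit Arguments. Unset Strict Implicit. Unset Printing Implicit Defensive.

(* Element j of I_n = {1..n} is represented by the ordinal j-1 : 'I_n;
   position i (1-based in the paper) is index i-1 in the tuple. *)
Definition kperm (n k : nat) := {t : k.-tuple 'I_n | uniq t}.

Definition kseq n k (p : kperm n k) : seq nat := map (@nat_of_ord n) (val p).

Definition swap0 (s : seq nat) (i : nat) : seq nat :=
  set_nth 0 (set_nth 0 s 0 (nth 0 s i)) i (nth 0 s 0).

(* adjacency of the (n,k)-star graph:
   (a) q is p with p_1 and p_i swapped, 2 <= i <= k (0-based: 1 <= i < k);
   (b) q = alpha p_2 ... p_k with alpha not among p_1,...,p_k. *)
Definition star_adj n k : rel (kperm n k) := fun p q =>
  [exists i : 'I_k, (0 < val i) && (kseq q == swap0 (kseq p) i)]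
  || ((behead (kseq q) == behead (kseq p)) && (head 0 (kseq q) \notin kseq p)).

Definition del_adj (T : finType) (adj : rel T) (S : {set T}) : rel T :=
  fun x y => [&& adj x y, x \notin S & y \notin S].

Definition disconnected_after (T : finType) (adj : rel T) (S : {set T}) : Prop :=
  exists x y, [/\ x \notin S, y \notin S & ~~ connect (del_adj adj S) x y].

Definition mindeg_after (T : finType) (adj : rel T) (S : {set T}) (h : nat) : Prop :=
  forall x, x \notin S -> h <= #|[set y | del_adj adj S x y]|.

Definition h_cut (T : finType) (adj : rel T) (h : nat) (S : {set T}) : Prop :=
  disconnected_after adj S /\ mindeg_after adj S h.

(* Consider the clique K of type-(b) edges
   formed by the n-k+1 vertices  a 0 1 ... (k-2)  with a >= k-1, and split it
   into the core X (heads k-1..k-1+h, h+1 vertices) and the rest S1 (n-k-h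
   vertices).  Every neighbour of X outside K is obtained by a type-(a) swap;
   these form S2 = { a 0 .. (a-1) b (a+1) .. (k-2) | a < k-1, b head of X },
   at most (k-1)(h+1) vertices.  With S = S1 u S2:
   - G - S is disconnected, since X is closed under the edges of G - S;
   - every vertex of X keeps its h core neighbours, and every other vertex
     outside S keeps n-k >= h neighbours (its head-replacement neighbours,
     at most one of which lies in S2 and is then replaced by a swap
     neighbour);
   - |S| <= (n-k-h) + (k-1)(h+1) = n + h(k-2) - 1.
   The file first develops the encoding of vertices and edges by label
   sequences, then defines S and proves the three facts above. *)

From mathcomp Require Import all_boot zify.

Lemma card_le_size_keys (T : finType) (U : eqType) (A : {set T}) (f : T -> U)
    (s : seq U) :
  {in A &, injective f} -> (forall x, x \in A -> f x \in s) -> #|A| <= size s.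
Proof.
move=> f_inj f_in; rewrite cardE -(size_map f); apply: uniq_leq_size.
  rewrite map_inj_in_uniq ?enum_uniq // => x y; rewrite !mem_enum; exact: f_inj.
by move=> u /mapP [x]; rewrite mem_enum => xA ->; apply: f_in.
Qed.

Lemma size_keys_le_card (T : finType) (U : eqType) (B : {set T}) (f : T -> U)
    (s : seq U) :
  uniq s -> (forall u, u \in s -> exists2 y, y \in B & f y = u) -> size s <= #|B|.
Proof.
move=> s_uniq s_hit; rewrite cardE -(size_map f).
apply: uniq_leq_size => // u /s_hit [y yB <-]; apply: map_f; by rewrite mem_enum.
Qed.

Definition valid n k (t : seq nat) :=
  [&& size t == k, uniq t & all (fun x => x < n) t].

Section Encoding.
Variables n k : nat.

Lemma kseq_valid (p : kperm n k) : valid n k (kseq p).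
Proof.
rewrite /valid /kseq size_map size_tuple eqxx map_inj_uniq ?(valP p) /=;
  last exact: val_inj.
by apply/allP => x /mapP [y _ ->].
Qed.

Lemma kseq_inj : injective (@kseq n k).
Proof. by move=> p q /(inj_map val_inj) E; do 2 apply: val_inj. Qed.

Lemma kseq_onto t : 0 < n -> valid n k t -> exists p : kperm n k, kseq p = t.
Proof.
case: n => [|m] // _ /and3P [/eqP t_size t_uniq /allP t_lt].
pose u := map (fun x => inord x : 'I_m.+1) t.
have u_size : size u == k by rewrite size_map t_size.
have u_val : map (@nat_of_ord _) u = t.
  rewrite -map_comp -[RHS]map_id; apply/eq_in_map => x xt /=.
  by rewrite inordK // t_lt.
have u_uniq : uniq (Tuple u_size) by rewrite /= -(map_inj_uniq val_inj) u_val.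
by exists (exist _ (Tuple u_size) u_uniq); rewrite /kseq /= u_val.
Qed.

Lemma valid_size {t} : valid n k t -> size t = k.
Proof. by case/and3P => /eqP. Qed.

Lemma valid_mem {t j} : valid n k t -> j < k -> nth 0 t j \in t.
Proof. by move=> t_valid jk; apply: mem_nth; rewrite (valid_size t_valid). Qed.

Lemma valid_lt {t j} : valid n k t -> j < k -> nth 0 t j < n.
Proof.
by move=> t_valid jk; case/and3P: (t_valid) => _ _ /allP; apply; apply: valid_mem.
Qed.

Lemma valid_nth_inj {t i j} :
  valid n k t -> i < k -> j < k -> nth 0 t i = nth 0 t j -> i = j.
Proof.
case/and3P=> /eqP t_size /(uniqP 0) t_uniq _ ik jk; apply: t_uniq;
  by rewrite inE t_size.
Qed.

Lemma valid_replace_head t b :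
  0 < k -> valid n k t -> b < n -> b \notin t -> valid n k (b :: behead t).
Proof.
move=> k0; case: t => [|c t] /and3P [/eqP t_size t_uniq t_lt] bn bt.
  by rewrite -t_size in k0.
move: t_uniq t_lt bt => /= /andP [_ t_uniq] /andP [_ t_lt].
rewrite inE negb_or => /andP [_ bt].
by rewrite /valid /= -t_size eqxx bt t_uniq bn t_lt.
Qed.

End Encoding.

Arguments kseq_valid {n k}.
Arguments kseq_inj {n k}.
Arguments kseq_onto {n k}.
Arguments valid_size {n k t}.
Arguments valid_mem {n k t j}.
Arguments valid_lt {n k t j}.
Arguments valid_nth_inj {n k t i j}.
Arguments valid_replace_head {n k t b}.

Lemma nth_swap0 (s : seq nat) i j : nth 0 (swap0 s i) j =
  if j == i then nth 0 s 0 else if j == 0 then nth 0 s i else nth 0 s j.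
Proof. by rewrite /swap0 nth_set_nth /= nth_set_nth. Qed.

Lemma valid_swap0 n k s i : valid n k s -> 0 < i < k -> valid n k (swap0 s i).
Proof.
move=> s_valid /andP [i0 ik]; have s_size := valid_size s_valid.
have sw_size : size (swap0 s i) = k by rewrite /swap0 !size_set_nth; lia.
pose tr j := if j == i then 0 else if j == 0 then i else j.
have trE j : nth 0 (swap0 s i) j = nth 0 s (tr j).
  by rewrite nth_swap0 /tr; case: ifP => //; case: ifP.
have tr_lt j : j < k -> tr j < k by rewrite /tr; case: (j =P i); case: (j =P 0); lia.
have tr_inj : injective tr.
  by move=> a b; rewrite /tr; case: (a =P i); case: (a =P 0); case: (b =P i);
    case: (b =P 0); lia.
case/and3P: s_valid => _ /(uniqP 0) s_uniq /(all_nthP 0) s_lt.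
rewrite /valid sw_size eqxx /=; apply/andP; split.
  apply/(uniqP 0) => a b; rewrite !inE sw_size !trE => ak bk E.
  by apply: tr_inj; apply: s_uniq E; rewrite inE s_size tr_lt.
by apply/(all_nthP 0) => j; rewrite sw_size trE => jk; rewrite s_lt ?s_size ?tr_lt.
Qed.

Section Adjacency.
Variables n k : nat.

Lemma adj_swap (p q : kperm n k) i :
  0 < i < k -> kseq q = swap0 (kseq p) i -> star_adj p q.
Proof.
case/andP => i0 ik E; apply/orP; left; apply/existsP; exists (Ordinal ik).
by rewrite /= i0 E eqxx.
Qed.

Lemma adj_head (p q : kperm n k) :
  (forall j, 0 < j < k -> nth 0 (kseq q) j = nth 0 (kseq p) j) ->
  nth 0 (kseq q) 0 \notin kseq p -> star_adj p q.
Proof.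
move=> E q0; apply/orP; right; rewrite -nth0 q0 andbT.
have [p_size q_size] := (valid_size (kseq_valid p), valid_size (kseq_valid q)).
apply/eqP; apply: (eq_from_nth (x0 := 0)); first by rewrite !size_behead p_size q_size.
move=> j; rewrite size_behead q_size => jk; rewrite !nth_behead; apply: E; lia.
Qed.

Lemma star_adjP (p q : kperm n k) : star_adj p q ->
  (exists2 i, 0 < i < k & kseq q = swap0 (kseq p) i) \/
  ((forall j, 0 < j < k -> nth 0 (kseq q) j = nth 0 (kseq p) j) /\
   nth 0 (kseq q) 0 \notin kseq p).
Proof.
case/orP => [/existsP [i /andP [i0 /eqP E]] | /andP [/eqP E q0]].
  by left; exists i; rewrite ?i0 ?ltn_ord.
right; split; last by rewrite nth0.
by move=> [|j] // _; rewrite -!nth_behead E.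
Qed.

End Adjacency.

Arguments adj_swap {n k p q i}.

Definition fresh_labels n (t : seq nat) := [seq b <- iota 0 n | b \notin t].

Lemma size_fresh_labels n k t : valid n k t -> size (fresh_labels n t) = n - k.
Proof.
move=> t_valid; case/and3P: (t_valid) => _ t_uniq /allP t_lt.
have used : perm_eq [seq b <- iota 0 n | b \in t] t.
  apply: uniq_perm; rewrite ?filter_uniq ?iota_uniq // => z.
  rewrite mem_filter mem_iota /=; case zt: (z \in t) => //=.
  by have := t_lt z zt; lia.
have := count_predC (mem t) (iota 0 n).
rewrite -size_filter (perm_size used) size_iota (valid_size t_valid).
rewrite /fresh_labels size_filter.
by rewrite (@eq_count _ _ (predC (mem t))) //; lia.
Qed.

Arguments size_fresh_labels {n k t}.

Section Cut.
Variables n k h : nat.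
Hypotheses (k2 : 2 <= k) (kn : k <= n - 1) (hnk : h <= n - k).

Local Notation lead q := (nth 0 q 0).

Lemma n_gt0 : 0 < n. Proof. lia. Qed.

(* Positions 2..k (0-based 1..k-1) carry the labels 0..k-2, i.e. the vertex
   lies in the clique K = {a 0 1 ... (k-2)} of type-(b) edges. *)
Definition tail_std (q : seq nat) :=
  [forall j : 'I_k, (0 < j) ==> (nth 0 q j == j.-1)].

Definition tail_std_but (q : seq nat) i :=
  [forall j : 'I_k, ((0 < j) && (j != i :> nat)) ==> (nth 0 q j == j.-1)].

Definition in_core q := tail_std q && (k.-1 <= lead q <= k.-1 + h).

Definition in_clique_cut q := tail_std q && (k.-1 + h < lead q).

(* Second part of the cut: the swap-neighbours of X outside the clique,
   i.e. head a < k-1 and a core label at position a+1 (where a belongs). *)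
Definition in_swap_cut q :=
  [&& lead q < k.-1, k.-1 <= nth 0 q (lead q).+1 <= k.-1 + h
    & tail_std_but q (lead q).+1].

Definition in_cut q := in_clique_cut q || in_swap_cut q.

Definition cut_set := [set p : kperm n k | in_cut (kseq p)].

Lemma tail_stdP q :
  reflect (forall j, 0 < j < k -> nth 0 q j = j.-1) (tail_std q).
Proof.
apply: (iffP forallP) => [H j /andP [j0 jk] | H j].
  by move: (H (Ordinal jk)); rewrite /= j0 => /eqP.
by apply/implyP => j0; apply/eqP; apply: H; rewrite j0 ltn_ord.
Qed.

Lemma tail_std_butP q i :
  reflect (forall j, 0 < j < k -> j != i -> nth 0 q j = j.-1) (tail_std_but q i).
Proof.
apply: (iffP forallP) => [H j /andP [j0 jk] ji | H j].
  by move: (H (Ordinal jk)); rewrite /= j0 ji => /eqP.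
by apply/implyP => /andP [j0 ji]; apply/eqP; apply: H; rewrite ?j0 ?ltn_ord.
Qed.

Lemma tail_std_cons b : tail_std (b :: iota 0 k.-1).
Proof. by apply/tail_stdP => -[|j] //= jk; rewrite nth_iota //; lia. Qed.

Lemma tail_std_eq {t} : valid n k t -> tail_std t -> t = lead t :: iota 0 k.-1.
Proof.
move=> t_valid /tail_stdP t_std; apply: (eq_from_nth (x0 := 0)).
  by rewrite (valid_size t_valid) /= size_iota; lia.
by move=> [|j] //; rewrite (valid_size t_valid) => jk /=; rewrite nth_iota ?t_std; lia.
Qed.

Lemma tail_std_lead {t} : valid n k t -> tail_std t -> k.-1 <= lead t.
Proof.
move=> t_valid t_std; move: (t_valid); rewrite (tail_std_eq t_valid t_std).
by case/and3P => _ /= /andP [+ _] _; rewrite mem_iota; lia.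
Qed.

Lemma valid_std b : k.-1 <= b < n -> valid n k (b :: iota 0 k.-1).
Proof.
move=> b_range; apply/and3P; split.
- by rewrite /= size_iota; apply/eqP; lia.
- by rewrite /= iota_uniq mem_iota andbT; lia.
- by apply/allP => x; rewrite inE mem_iota => /orP [/eqP ->|]; lia.
Qed.

Lemma core_notin_cut b : k.-1 <= b <= k.-1 + h -> ~~ in_cut (b :: iota 0 k.-1).
Proof.
move=> b_range; apply/norP; split; first by apply/nandP; right => /=; lia.
by apply/and3P => -[] /=; lia.
Qed.

(* A type-(b)
   edge keeps the tail standard and cannot introduce a head in 0..k-2; a
   type-(a) edge out of X always lands in the swap part of the cut. *)
Lemma core_closed (p q : kperm n k) :
  in_core (kseq p) -> star_adj p q -> ~~ in_cut (kseq q) -> in_core (kseq q).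
Proof.
case/andP => /tail_stdP p_std p_lead /star_adjP [[i /andP [i0 ik] E] | [E q0]] q_cut.
  have q_lead : lead (kseq q) = i.-1.
    rewrite E nth_swap0 (_ : (0 == i) = false); last by apply/eqP; lia.
    by rewrite p_std ?i0 //; lia.
  have q_i : nth 0 (kseq q) i = lead (kseq p) by rewrite E nth_swap0 eqxx.
  case/norP: q_cut => _ /negP []; rewrite /in_swap_cut q_lead prednK // q_i.
  apply/and3P; split => //; first lia.
  apply/tail_std_butP => j /andP [j0 jk] ji; rewrite E nth_swap0 (negbTE ji).
  by rewrite (_ : (j == 0) = false) ?p_std ?j0 //; lia.
have q_std : tail_std (kseq q) by apply/tail_stdP => j jk; rewrite E // p_std.
rewrite /in_core q_std /=; apply/andP; split; last first.
  by move: q_cut; rewrite /in_cut /in_clique_cut q_std negb_or => /andP [+ _]; lia.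
rewrite leqNgt; apply/negP => q_small; move/negP: q0; apply.
have q_pos : (lead (kseq q)).+1 < k by lia.
by have := valid_mem (kseq_valid p) q_pos; rewrite p_std //; lia.
Qed.

Lemma core_reach {x y : kperm n k} : in_core (kseq x) ->
  connect (del_adj (@star_adj n k) cut_set) x y -> in_core (kseq y).
Proof.
move=> x_core /connectP [pth]; elim: pth x x_core => [|z pth IH] x x_core /=.
  by move=> _ ->.
case/andP => /and3P [xz _ z_cut] z_pth y_last; apply: IH z_pth y_last.
by apply: core_closed xz _; rewrite inE in z_cut.
Qed.

(* G - S is disconnected: the core vertex (k-1) 0 1 ... (k-2) cannot reach the
   non-clique vertex (k-1) k 1 2 ... (k-2), which is not in the cut. *)
Lemma cut_disconnected : disconnected_after (@star_adj n k) cut_set.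
Proof.
have [x x_seq] := kseq_onto _ n_gt0 (valid_std (k.-1) ltac:(lia)).
set t := k.-1 :: k :: iota 1 (k - 2).
have t_valid : valid n k t.
  apply/and3P; split.
  - by rewrite /= size_iota; apply/eqP; lia.
  - by rewrite /= iota_uniq !inE !mem_iota andbT negb_or; apply/andP; split; lia.
  - by apply/allP => z; rewrite !inE mem_iota => /orP [/eqP ->|/orP [/eqP ->|]]; lia.
have [y y_seq] := kseq_onto _ n_gt0 t_valid.
have t_std : ~~ tail_std t by apply/tail_stdP => /(_ 1 ltac:(lia)) /=; lia.
exists x, y; split.
- by rewrite inE x_seq core_notin_cut //; lia.
- rewrite inE y_seq /in_cut /in_clique_cut /in_swap_cut (negbTE t_std) /=.
  by rewrite ltnn.
- have x_core : in_core (kseq x) by rewrite x_seq /in_core tail_std_cons /=; lia.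
  by apply/negP => /(core_reach x_core); rewrite y_seq /in_core (negbTE t_std).
Qed.

Local Notation S := cut_set.
Local Notation nbrs x := [set y | del_adj (@star_adj n k) S x y].

Lemma size_le_degree (x : kperm n k) (L : seq (seq nat)) :
  x \notin S -> uniq L ->
  (forall u, u \in L ->
     exists2 y : kperm n k, kseq y = u & star_adj x y && ~~ in_cut u) ->
  size L <= #|nbrs x|.
Proof.
move=> xS L_uniq L_nbr; apply: (@size_keys_le_card _ _ _ (@kseq n k)) L_uniq _.
move=> u /L_nbr [y y_seq /andP [xy yS]]; exists y => //.
by rewrite inE /del_adj xy xS inE y_seq.
Qed.

(* A core vertex keeps its h other core neighbours in the clique. *)
Lemma degree_core (x : kperm n k) : in_core (kseq x) -> h <= #|nbrs x|.
Proof.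
case/andP=> x_std x_lead; have x_valid := kseq_valid x.
have x_seq := tail_std_eq x_valid x_std.
set a := lead (kseq x) in x_lead x_seq.
set L := map (fun b => b :: iota 0 k.-1) (rem a (iota k.-1 h.+1)).
have L_size : size L = h.
  by rewrite size_map size_rem ?size_iota // mem_iota; lia.
rewrite -L_size; apply: size_le_degree.
- by rewrite inE x_seq core_notin_cut.
- by rewrite map_inj_uniq ?rem_uniq ?iota_uniq // => b c [].
move=> u /mapP [b]; rewrite mem_rem_uniq ?iota_uniq // inE mem_iota.
case/andP=> ba b_range ->.
have [y y_seq] := kseq_onto _ n_gt0 (valid_std b ltac:(lia)).
exists y => //; rewrite core_notin_cut ?andbT; last by lia.
apply: adj_head; first by move=> j /andP [j0 _]; rewrite y_seq x_seq; case: j j0.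
by rewrite y_seq x_seq /= inE mem_iota negb_or ba; lia.
Qed.

(* A vertex outside S and X, with a fresh label b placed at its head, gives a
   type-(b) neighbour; it is not in the clique part of the cut, since x itself
   would then be a clique vertex outside X and S. *)
Lemma head_neighbour {x : kperm n k} {b} :
  ~~ in_cut (kseq x) -> ~~ in_core (kseq x) -> b \in fresh_labels n (kseq x) ->
  exists2 y : kperm n k, kseq y = b :: behead (kseq x) &
    star_adj x y && ~~ in_clique_cut (b :: behead (kseq x)).
Proof.
move=> xS xX; rewrite mem_filter mem_iota add0n => /andP [bx /= b_lt].
have x_valid := kseq_valid x; set t := b :: behead (kseq x).
have t_tail j : 0 < j -> nth 0 t j = nth 0 (kseq x) j.
  by case: j => [|j] // _; rewrite /= nth_behead.
have [y y_seq] := kseq_onto _ n_gt0 (valid_replace_head (ltnW k2) x_valid b_lt bx).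
exists y => //; rewrite adj_head /=; last by rewrite y_seq.
- apply/negP => /andP [/tail_stdP t_std _].
  have x_std : tail_std (kseq x).
    by apply/tail_stdP => j /andP [j0 jk]; rewrite -t_tail ?t_std ?j0.
  have := tail_std_lead x_valid x_std; move: xS xX.
  by rewrite /in_cut /in_clique_cut /in_core x_std /=; lia.
- by move=> j /andP [j0 _]; rewrite y_seq t_tail.
Qed.

(* Two vertices differing only in their head cannot both lie in the swap part
   of the cut: position b+1 of the one with head b must carry a core label,
   while the other (with head b' != b) requires the label b there. *)
Lemma swap_cut_lead_unique {t : seq nat} {b b'} :
  in_swap_cut (b :: t) -> in_swap_cut (b' :: t) -> b = b'.
Proof.
case/and3P => /= b_lt b_core _ /and3P [/= b'_lt _ /tail_std_butP b'_std].
apply/eqP; apply: contraTT b_core => bb'.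
have := b'_std b.+1 ltac:(lia); rewrite eqSS bb' => /(_ isT) /= ->; lia.
Qed.

(* If the head-neighbour with fresh label b lies in the swap part of the cut,
   then the swap of positions 1 and b+1 of x is a neighbour outside the cut:
   its head is a core label, and position b+1 carries the head of x, not b. *)
Lemma swap_neighbour {x : kperm n k} {b} :
  b \notin kseq x -> in_swap_cut (b :: behead (kseq x)) ->
  [/\ 0 < b.+1 < k, valid n k (swap0 (kseq x) b.+1)
    & ~~ in_cut (swap0 (kseq x) b.+1)].
Proof.
move=> bx /and3P [/= b_lt]; rewrite nth_behead /= => b_core _.
have x_valid := kseq_valid x; have ik : 0 < b.+1 < k by lia.
split => //; first exact: valid_swap0.
have sw_lead : lead (swap0 (kseq x) b.+1) = nth 0 (kseq x) b.+1 by rewrite nth_swap0.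
apply/norP; split; last by apply/negP => /and3P []; rewrite sw_lead; lia.
apply/nandP; left; apply/negP => /tail_stdP /(_ b.+1 ik).
rewrite nth_swap0 eqxx /= => x_lead.
by move: bx; rewrite -x_lead (valid_mem x_valid) //; lia.
Qed.

(* A vertex outside S and X has n - k >= h neighbours in G - S: its n - k
   head-neighbours, except that one of them (at most, by uniqueness) may be in
   the swap part of the cut, in which case a swap-neighbour replaces it. *)
Lemma degree_outside (x : kperm n k) :
  ~~ in_cut (kseq x) -> ~~ in_core (kseq x) -> h <= #|nbrs x|.
Proof.
move=> xS xX; have xS' : x \notin S by rewrite inE.
set C := fresh_labels n (kseq x); set t := behead (kseq x).
have C_uniq : uniq C by rewrite filter_uniq ?iota_uniq.
have C_size : size C = n - k := size_fresh_labels (kseq_valid x).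
have heads_uniq (D : seq nat) : uniq D -> uniq [seq b :: t | b <- D].
  by move=> D_uniq; rewrite map_inj_uniq // => b c [].
have head_nbr b : b \in C -> ~~ in_swap_cut (b :: t) ->
    exists2 y : kperm n k, kseq y = b :: t & star_adj x y && ~~ in_cut (b :: t).
  move=> bC b_swap; have [y y_seq /andP [xy y_clique]] := head_neighbour xS xX bC.
  by exists y; rewrite // xy /in_cut negb_or y_clique.
apply: leq_trans hnk _; rewrite -C_size.
case: (boolP (has (fun b => in_swap_cut (b :: t)) C)).
  case/hasP=> b0 b0C b0_swap.
  have b0x : b0 \notin kseq x by move: b0C; rewrite mem_filter => /andP [].
  have [ik sw_valid sw_cut] := swap_neighbour b0x b0_swap.
  have [z z_seq] := kseq_onto _ n_gt0 sw_valid.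
  set L := swap0 (kseq x) b0.+1 :: [seq b :: t | b <- rem b0 C].
  have C_pos : 0 < size C by rewrite -has_predT; apply/hasP; exists b0.
  have -> : size C = size L by rewrite /= size_map size_rem // prednK.
  apply: size_le_degree => //.
  - rewrite /= heads_uniq ?rem_uniq // andbT; apply/mapP => -[b _ sw_eq].
    have := congr1 (nth 0 ^~ b0.+1) sw_eq; rewrite nth_swap0 eqxx /= nth_behead.
    by move/(valid_nth_inj (kseq_valid x)); lia.
  move=> u; rewrite inE => /orP [/eqP -> | /mapP [b]].
    by exists z; rewrite // (adj_swap ik z_seq).
  rewrite mem_rem_uniq // inE => /andP [bb0 bC] ->; apply: head_nbr => //.
  by apply: contra bb0 => b_swap; rewrite (swap_cut_lead_unique b_swap b0_swap).
move/hasPn=> C_swap; rewrite -(size_map (fun b => b :: t)).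
apply: size_le_degree => //.
- exact: heads_uniq.
- by move=> u /mapP [b bC ->]; apply: head_nbr => //; apply: C_swap.
Qed.

(* A clique vertex is determined by its head, which lies in [k+h, n). *)
Lemma card_clique_cut : #|[set p : kperm n k | in_clique_cut (kseq p)]| <= n - k - h.
Proof.
rewrite -(size_iota (k + h) (n - k - h)).
apply: (@card_le_size_keys _ _ _ (fun p => lead (kseq p))).
  move=> p q; rewrite !inE => /andP [p_std _] /andP [q_std _] E; apply: kseq_inj.
  by rewrite (tail_std_eq (kseq_valid p) p_std) (tail_std_eq (kseq_valid q) q_std) E.
move=> p; rewrite inE mem_iota => /andP [_ p_lead].
by have := valid_lt (kseq_valid p) (_ : 0 < k); lia.
Qed.

(* A vertex of the swap part is determined by its head a < k-1 and by the
   core label at position a+1. *)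
Lemma card_swap_cut : #|[set p : kperm n k | in_swap_cut (kseq p)]| <= k.-1 * h.+1.
Proof.
rewrite -(size_iota 0 k.-1) -(size_iota k.-1 h.+1) -(size_allpairs pair).
pose key (p : kperm n k) : nat * nat :=
  (lead (kseq p), nth 0 (kseq p) (lead (kseq p)).+1).
apply: (@card_le_size_keys _ _ _ key).
  move=> p q; rewrite !inE => /and3P [_ _ /tail_std_butP p_std].
  case/and3P=> _ _ /tail_std_butP q_std [E1 E2]; apply: kseq_inj.
  have [p_size q_size] := (valid_size (kseq_valid p), valid_size (kseq_valid q)).
  apply: (eq_from_nth (x0 := 0)) => [|j]; first by rewrite p_size q_size.
  rewrite p_size => jk; case: (j =P 0) => [-> // | /eqP j0].
  case: (j =P (lead (kseq p)).+1) => [-> | /eqP jp]; first by rewrite E2 E1.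
  have j_pos : 0 < j < k by rewrite lt0n j0.
  by rewrite p_std // q_std // -E1.
move=> p; rewrite inE => /and3P [p_lead p_core _].
by apply: allpairs_f; rewrite mem_iota; lia.
Qed.

(* |S| <= (n-k-h) + (k-1)(h+1) = n + h(k-2) - 1. *)
Lemma card_cut : #|cut_set| <= n + h * (k - 2) - 1.
Proof.
have -> : cut_set = [set p | in_clique_cut (kseq p)] :|: [set p | in_swap_cut (kseq p)].
  by apply/setP => p; rewrite !inE.
apply: leq_trans (leq_card_setU _ _) _.
apply: leq_trans (leq_add card_clique_cut card_swap_cut) _.
case: k k2 kn hnk => [|[|k']] // _ kn' hnk'.
by rewrite subn2 /= (mulnC h) mulSn mulnS; lia.
Qed.

End Cut.

Theorem lemma3p1 (n k h : nat) :
  2 <= k -> k <= n - 1 -> h <= n - k ->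
  exists S : {set kperm n k},
    h_cut (@star_adj n k) h S /\ #|S| <= n + h * (k - 2) - 1.
Proof.
move=> k2 kn hnk; exists (cut_set n k h); split; last exact: card_cut.
split; first exact: cut_disconnected.
move=> x; rewrite inE => x_cut.
have [x_core | x_core] := boolP (in_core k h (kseq x)).
  exact: degree_core.
exact: degree_outside.
Qed.
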